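(* Let $\mathcal{D}$, $\mathcal{X}$ be finite sets and $\mathcal{Y}=\{0,1\}$. Let $q_{D,X,Y}$ be the true distribution of the data on $\mathcal{D}\times\mathcal{X}\times\mathcal{Y}$, and let $p_{D,X,Y}$ be the empirical distribution of $n$ i.i.d. samples from $q_{D,X,Y}$. Let $p_{\hat X,\hat Y|X,Y,D}$ be a randomized mapping (conditional distribution from $\mathcal{D}\times\mathcal{X}\times\mathcal{Y}$ to $\mathcal{X}\times\mathcal{Y}$) determined from $p_{D,X,Y}$; denote by $p_{D,\hat X,\hat Y}$ (with marginals/conditionals $p_{\hat Y|D}$, $p_{\hat X,\hat Y}$) the joint distribution of $(D,\hat X,\hat Y)$ when the mapping is applied to $(D,X,Y)\sim p_{D,X,Y}$, and by $q_{D,\hat X,\hat Y}$ (with $q_{\hat Y|D}$, $q_{\hat X,\hat Y}$) the corresponding distribution when it is applied to $(D,X,Y)\sim q_{D,X,Y}$. Let $p_{Y_T}$ be a target distribution on $\mathcal{Y}$, let $J(p,q)=|p/q-1|$, and let $\Delta(p_{X,Y},p_{\hat X,\hat Y})=\sum_{x,y}|p_{X,Y}(x,y)-p_{\hat X,\hat Y}(x,y)|$. Suppose that for all $y\in\mathcal{Y}$, $d\in\mathcal{D}$ we have $p_{Y,D}(y,d)>0$ and $J\big(p_{\hat Y|D}(y|d),p_{Y_T}(y)\big)\le\epsilon$, and that $\Delta(p_{X,Y},p_{\hat X,\hat Y})\le\mu$. Then with probability $1-\beta$, \[ J\big(q_{\hat Y|D}(y|d),p_{Y_T}(y)\big)=\epsilon+O\!\left(\sqrt{\tfrac{1}{n}\log\tfrac{n}{\beta}}\right),\qquad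 \Delta\big(q_{X,Y},q_{\hat X,\hat Y}\big)=\mu+O\!\left(\sqrt{\tfrac{1}{n}\log\tfrac{n}{\beta}}\right), \] where the constants in the $O(\cdot)$ terms depend on the alphabet size $|\mathcal{D}||\mathcal{X}||\mathcal{Y}|$ and on the minimum probability $\min_{y,d}p_{D,\hat Y}(d,y)$, which are treated as fixed (the latter bounded away from zero).
   Context: $D$ denotes discriminatory variables, $X$ features, $Y$ a binary outcome; the mapping $p_{\hat X,\hat Y|X,Y,D}$ transforms $(X,Y)$ into $(\hat X,\hat Y)$ while retaining $D$. *)

From HB Require Import structures.
From mathcomp Require Import all_boot all_order all_algebra.
From mathcomp Require Import boolp reals exp.
Set Implicit Arguments. Unset Strict Implicit. Unset Printing Implicit Defensive.
Import Order.TTheory GRing.Theory Num.Theory.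
Local Open Scope ring_scope.

Section Defs.
Variables (R : realType) (D X : finType).

Definition jdist := D -> X -> bool -> R.

Definition is_dist (A : finType) (f : A -> R) :=
  (forall a, 0 <= f a) /\ \sum_a f a = 1.

Definition is_jdist (p : jdist) :=
  (forall d x y, 0 <= p d x y) /\ \sum_d \sum_x \sum_y p d x y = 1.

(* randomized mapping p_{Xhat,Yhat | D,X,Y} : K d x y x' y' *)
Definition kernel := D -> X -> bool -> X -> bool -> R.

Definition is_kernel (K : kernel) :=
  (forall d x y x' y', 0 <= K d x y x' y') /\
  (forall d x y, \sum_x' \sum_y' K d x y x' y' = 1).

Definition push (p : jdist) (K : kernel) : jdist :=
  fun d x' y' => \sum_x \sum_y p d x y * K d x y x' y'.

Definition marg_D (p : jdist) (d : D) : R := \sum_x \sum_y p d x y.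
Definition marg_YD (p : jdist) (y : bool) (d : D) : R := \sum_x p d x y.
Definition marg_XY (p : jdist) (x : X) (y : bool) : R := \sum_d p d x y.

Definition marg_DYhat (p : jdist) (K : kernel) (d : D) (y : bool) : R :=
  marg_YD (push p K) y d.
Definition cond_Yhat_D (p : jdist) (K : kernel) (y : bool) (d : D) : R :=
  marg_DYhat p K d y / marg_D p d.

Definition J (a b : R) : R := `| a / b - 1 |.

Definition Delta (f g : X -> bool -> R) : R :=
  \sum_x \sum_y `| f x y - g x y |.

Definition empirical (n : nat) (s : {ffun 'I_n -> (D * X * bool)%type}) : jdist :=
  fun d x y => #|[set i | s i == (d, x, y)]|%:R / n%:R.

Definition sample_prob (q : jdist) (n : nat)
    (E : {ffun 'I_n -> (D * X * bool)%type} -> Prop) : R :=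
  \sum_(s : {ffun 'I_n -> (D * X * bool)%type} | `[< E s >])
     \prod_(i < n) q (s i).1.1 (s i).1.2 (s i).2.

End Defs.

From mathcomp Require Import all_boot all_order all_algebra.
From mathcomp Require Import boolp reals exp sequences.
From mathcomp Require Import lra ring.
Import Order.TTheory GRing.Theory Num.Theory.
Local Open Scope ring_scope.

(* The statement splits into a deterministic stability estimate and a
   concentration bound.  Applying the same Markov kernel to q and to p cannot
   increase their l1 distance, so every marginal entering J and Delta moves by
   at most |q - p|_1 when p is replaced by q.  For Delta this is the triangle
   inequality; for q_{Yhat|D} = q_{D,Yhat} / q_D the lower bound gamma on
   p_{D,Yhat} keeps the ratio Lipschitz, and since J(u, b) <= eps with u >= gamma
   forces 1/b <= (1 + eps)/gamma, J moves by O(|q - p|_1 / gamma^2).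
   A Chernoff bound on each atom count, |count - n q| <= n t except with
   probability 2 exp(-n t^2 / 8), and a union bound over the atoms give
   |q - p|_1 <= |D x X x Y| t with probability 1 - beta for
   t = O(sqrt (log (n / beta) / n)). *)

Lemma ler_sum_term {R : numDomainType} {I : finType} (F : I -> R) (i0 : I) :
  (forall i, 0 <= F i) -> F i0 <= \sum_i F i.
Proof. by move=> F_ge0; rewrite (bigD1 i0) //= lerDl sumr_ge0. Qed.

Lemma exchange_big3 {R : nmodType} {I J K : finType} (F : I -> J -> K -> R) :
  \sum_i \sum_j \sum_k F i j k = \sum_k \sum_i \sum_j F i j k.
Proof. by under eq_bigr => i _ do rewrite exchange_big; rewrite exchange_big. Qed.

Lemma expR_le_quad {R : realType} (x : R) : `|x| <= 1 / 2 -> expR x <= 1 + x + 2 * x ^+ 2.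
Proof.
move=> /ler_normlP [x_ge x_le].
have expNx_gt0 : 0 < expR (- x) := expR_gt0 _.
rewrite -[expR x]invrK -expRN -(ler_pM2r expNx_gt0) mulVf ?gt_eqF //.
apply: le_trans (ler_wpM2l _ (expR_ge1Dx (- x))); last by have := sqr_ge0 x; lra.
by rewrite expr2; nra.
Qed.

Section Delta.
Context {R : realType} {X : finType}.

Lemma DeltaC (f g : X -> bool -> R) : Delta f g = Delta g f.
Proof. by apply: eq_bigr => x _; apply: eq_bigr => y _; rewrite distrC. Qed.

Lemma Delta_triangle (f g h : X -> bool -> R) : Delta f h <= Delta f g + Delta g h.
Proof.
rewrite /Delta -big_split; apply: ler_sum => x _.
by rewrite -big_split; apply: ler_sum => y _; apply: ler_distD.
Qed.

End Delta.

Section Ratio.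
Context {R : realType}.

Lemma J_stable (u v b eps gamma : R) : 0 < gamma <= u -> 0 <= b -> J u b <= eps ->
  J v b <= eps + (1 + eps) / gamma * `|v - u|.
Proof.
move=> /andP [gamma_gt0 gamma_le_u] b_ge0 Jub.
have eps_ge0 : 0 <= eps := le_trans (normr_ge0 _) Jub.
have err_ge0 : 0 <= (1 + eps) / gamma * `|v - u| by rewrite mulr_ge0 ?divr_ge0 //; lra.
(* J u 0 = 1 for every u, because u / 0 = 0. *)
have [b0 | b_neq0] := eqVneq b 0.
  by move: Jub; rewrite b0 /J !invr0 !mulr0 => ?; lra.
have b_gt0 : 0 < b by rewrite lt0r b_neq0.
have invb_le : b^-1 <= (1 + eps) / gamma.
  move: Jub; rewrite /J => /ler_normlP [_ ub_le].
  rewrite -div1r ler_pdivrMr // mulrAC ler_pdivlMr // mul1r.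
  by move: ub_le; rewrite lerBlDl ler_pdivrMr //; lra.
rewrite /J (_ : v / b - 1 = (u / b - 1) + (v - u) / b); last by ring.
apply: (le_trans (ler_normD _ _)); apply: lerD => //.
have invb_ge0 : 0 <= b^-1 by rewrite invr_ge0 ltW.
by rewrite normrM (ger0_norm invb_ge0) [_ / gamma * _]mulrC ler_wpM2l.
Qed.

Lemma ratio_dist (aq ap mq mp gamma d : R) :
  0 < gamma <= ap -> ap <= mp -> 0 <= aq / mq <= 1 ->
  `|aq - ap| <= d -> `|mq - mp| <= d -> `|aq / mq - ap / mp| <= 4 * d / gamma.
Proof.
move=> /andP [gamma_gt0 gamma_le_ap] ap_le_mp /andP [v_ge0 v_le1] daq dmq.
have d_ge0 : 0 <= d := le_trans (normr_ge0 _) daq.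
have mp_gt0 : 0 < mp by lra.
have u_ge0 : 0 <= ap / mp by rewrite divr_ge0 //; lra.
have u_le1 : ap / mp <= 1 by rewrite ler_pdivrMr // mul1r.
have [gamma_le | d_lt] := leP gamma (2 * d).
  apply: le_trans (_ : 1 <= _); first by rewrite ler_norml; apply/andP; split; lra.
  by rewrite ler_pdivlMr // mul1r; lra.
have mq_gt : gamma / 2 <= mq by move: dmq => /ler_normlP [? ?]; lra.
have mq_gt0 : 0 < mq by lra.
rewrite (_ : aq / mq - ap / mp = (aq - ap - ap / mp * (mq - mp)) / mq); last first.
  by field; rewrite !gt_eqF.
rewrite normrM normfV (gtr0_norm mq_gt0) ler_pdivrMr //.
apply: le_trans (_ : 2 * d <= _).
  rewrite (le_trans (ler_normB _ _)) // normrM (ger0_norm u_ge0).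
  by have := ler_pM u_ge0 (normr_ge0 _) u_le1 dmq; lra.
rewrite (_ : 4 * d / gamma * mq = 2 * d * (2 * mq / gamma)); last by field; rewrite gt_eqF.
by rewrite ler_peMr ?mulr_ge0 // ler_pdivlMr // mul1r; lra.
Qed.

End Ratio.

Section Stability.
Context {R : realType} {D X : finType}.
Implicit Types (p q r : jdist R D X) (K : kernel R D X).

Definition l1dist q p : R := \sum_d \sum_x \sum_y `|q d x y - p d x y|.

Lemma l1dist_marg_D q p :
  l1dist q p = \sum_d marg_D (fun d x y => `|q d x y - p d x y|) d.
Proof. by []. Qed.

Lemma marg_D_push p K d : is_kernel K -> marg_D (push p K) d = marg_D p d.
Proof.
case=> _ K_sum1; rewrite /marg_D /push exchange_big3; apply: eq_bigr => x _.
rewrite exchange_big3; apply: eq_bigr => y _.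
rewrite -[RHS]mulr1 -(K_sum1 d x y) mulr_sumr.
by apply: eq_bigr => x' _; rewrite mulr_sumr.
Qed.

Lemma push_ge0 p K d x y :
  (forall d x y, 0 <= p d x y) -> is_kernel K -> 0 <= push p K d x y.
Proof. by move=> p_ge0 [K_ge0 _]; do 2 (apply: sumr_ge0 => ? _); rewrite mulr_ge0. Qed.

Lemma l1dist_push q p K : is_kernel K -> l1dist (push q K) (push p K) <= l1dist q p.
Proof.
move=> K_ker; rewrite !l1dist_marg_D; apply: ler_sum => d _.
rewrite -(marg_D_push (fun d x y => `|q d x y - p d x y|) K d K_ker).
apply: ler_sum => x' _; apply: ler_sum => y' _.
rewrite /push -sumrB; apply: (le_trans (ler_norm_sum _ _ _)); apply: ler_sum => x _.
rewrite -sumrB; apply: (le_trans (ler_norm_sum _ _ _)); apply: ler_sum => y _.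
by case: K_ker => K_ge0 _; rewrite -mulrBl normrM (ger0_norm (K_ge0 _ _ _ _ _)).
Qed.

Lemma marg_YD_dist q p y d : `|marg_YD q y d - marg_YD p y d| <= l1dist q p.
Proof.
rewrite l1dist_marg_D /marg_YD -sumrB; apply: (le_trans (ler_norm_sum _ _ _)).
apply: le_trans (ler_sum_term _ d _); last by move=> ?; do 2 (apply: sumr_ge0 => ? _).
by apply: ler_sum => x _; apply: ler_sum_term.
Qed.

Lemma marg_D_dist q p d : `|marg_D q d - marg_D p d| <= l1dist q p.
Proof.
rewrite l1dist_marg_D /marg_D -sumrB; apply: (le_trans (ler_norm_sum _ _ _)).
apply: le_trans (ler_sum_term _ d _); last by move=> ?; do 2 (apply: sumr_ge0 => ? _).
by apply: ler_sum => x _; rewrite -sumrB ler_norm_sum.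
Qed.

Lemma Delta_marg_XY q p : Delta (marg_XY q) (marg_XY p) <= l1dist q p.
Proof.
rewrite /Delta /l1dist 2!exchange_big3; apply: ler_sum => x _; apply: ler_sum => y _.
by rewrite /marg_XY -sumrB ler_norm_sum.
Qed.

Lemma Delta_push_stable q p K : is_kernel K ->
  Delta (marg_XY q) (marg_XY (push q K)) <=
  Delta (marg_XY p) (marg_XY (push p K)) + 2 * l1dist q p.
Proof.
move=> K_ker.
have := Delta_triangle (marg_XY q) (marg_XY p) (marg_XY (push q K)).
have := Delta_triangle (marg_XY p) (marg_XY (push p K)) (marg_XY (push q K)).
have := Delta_marg_XY q p.
have := le_trans (Delta_marg_XY (push q K) (push p K)) (l1dist_push q p K K_ker).
rewrite [Delta (marg_XY (push p K)) _]DeltaC; lra.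
Qed.


Lemma marg_YD_le_marg_D r y d :
  (forall d x y, 0 <= r d x y) -> marg_YD r y d <= marg_D r d.
Proof.
move=> r_ge0; rewrite /marg_D exchange_big /=.
by apply: (ler_sum_term (fun y => marg_YD r y d)) => y'; apply: sumr_ge0.
Qed.

Lemma marg_DYhat_le_marg_D p K d y :
  is_jdist p -> is_kernel K -> marg_DYhat p K d y <= marg_D p d.
Proof.
move=> [p_ge0 _] K_ker; rewrite -(marg_D_push p K d K_ker).
by apply: marg_YD_le_marg_D => ? ? ?; apply: push_ge0.
Qed.

Lemma marg_D_le1 p d : is_jdist p -> marg_D p d <= 1.
Proof.
case=> p_ge0 <-; apply: (ler_sum_term (marg_D p)) => d'.
by do 2 (apply: sumr_ge0 => ? _).
Qed.

Lemma cond_Yhat_D_ge0_le1 p K y d :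
  is_jdist p -> is_kernel K -> 0 <= cond_Yhat_D p K y d <= 1.
Proof.
move=> p_jd K_ker; have a_le := marg_DYhat_le_marg_D p K d y p_jd K_ker.
have a_ge0 : 0 <= marg_DYhat p K d y.
  by apply: sumr_ge0 => x _; apply: push_ge0 => //; case: p_jd.
rewrite /cond_Yhat_D; have [m0 | m_neq0] := eqVneq (marg_D p d) 0.
  by rewrite m0 invr0 mulr0 lexx ler01.
have m_gt0 : 0 < marg_D p d by rewrite lt0r m_neq0 (le_trans a_ge0).
by rewrite divr_ge0 ?ler_pdivrMr ?mul1r // ltW.
Qed.

Lemma cond_Yhat_D_dist q p K (gamma : R) y d :
  is_jdist q -> is_jdist p -> is_kernel K -> 0 < gamma <= marg_DYhat p K d y ->
  `|cond_Yhat_D q K y d - cond_Yhat_D p K y d| <= 4 * l1dist q p / gamma.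
Proof.
move=> q_jd p_jd K_ker gamma_le; apply: ratio_dist => //.
- exact: marg_DYhat_le_marg_D.
- exact: cond_Yhat_D_ge0_le1.
- exact: le_trans (marg_YD_dist (push q K) (push p K) y d) (l1dist_push q p K K_ker).
- exact: marg_D_dist.
Qed.

Lemma J_cond_Yhat_D_stable q p K (gamma eps b : R) y d :
  is_jdist q -> is_jdist p -> is_kernel K -> 0 < gamma <= marg_DYhat p K d y -> 0 <= b ->
  J (cond_Yhat_D p K y d) b <= eps ->
  J (cond_Yhat_D q K y d) b <= eps + (1 + eps) / gamma * (4 * l1dist q p / gamma).
Proof.
move=> q_jd p_jd K_ker /andP [gamma_gt0 gamma_le] b_ge0 J_le.
have cond_ge : 0 < gamma <= cond_Yhat_D p K y d.
  have a_le := marg_DYhat_le_marg_D p K d y p_jd K_ker.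
  have m_le1 := marg_D_le1 p d p_jd.
  by rewrite gamma_gt0 /cond_Yhat_D ler_pdivlMr; nra.
apply: le_trans (J_stable _ (cond_Yhat_D q K y d) _ _ _ cond_ge b_ge0 J_le) _.
rewrite lerD2l ler_wpM2l ?cond_Yhat_D_dist ?gamma_gt0 //.
by rewrite divr_ge0 ?ltW //; have := le_trans (normr_ge0 _) J_le; lra.
Qed.

Definition stab_const (gamma eps : R) : R := 4 * (1 + eps) / gamma ^+ 2 + 2.

Lemma fairness_stable q p K (gamma eps mu : R) (b : bool -> R) :
  is_jdist q -> is_jdist p -> is_kernel K -> 0 < gamma -> 0 <= eps ->
  (forall d y, gamma <= marg_DYhat p K d y) -> (forall y, 0 <= b y) ->
  (forall y d, J (cond_Yhat_D p K y d) (b y) <= eps) ->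
  Delta (marg_XY p) (marg_XY (push p K)) <= mu ->
  (forall y d, J (cond_Yhat_D q K y d) (b y) <= eps + stab_const gamma eps * l1dist q p) /\
  Delta (marg_XY q) (marg_XY (push q K)) <= mu + stab_const gamma eps * l1dist q p.
Proof.
move=> q_jd p_jd K_ker gamma_gt0 eps_ge0 gamma_le b_ge0 J_le Delta_le.
have l1_ge0 : 0 <= l1dist q p by do 3 (apply: sumr_ge0 => ? _).
have cJ_ge0 : 0 <= 4 * (1 + eps) / gamma ^+ 2.
  by rewrite divr_ge0 ?sqr_ge0 //; lra.
split=> [y d | ].
  have gamma_le' : 0 < gamma <= marg_DYhat p K d y by rewrite gamma_gt0 gamma_le.
  apply: (le_trans (J_cond_Yhat_D_stable _ _ _ _ _ _ _ _ q_jd p_jd K_ker gamma_le'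
                     (b_ge0 y) (J_le y d))).
  rewrite lerD2l (_ : _ / gamma * _ = 4 * (1 + eps) / gamma ^+ 2 * l1dist q p).
    by rewrite ler_wpM2r // lerDl.
  by field; rewrite gt_eqF.
apply: (le_trans (Delta_push_stable q p K K_ker)).
by rewrite lerD // ler_wpM2r // lerDr.
Qed.

End Stability.

Section Empirical.
Context {R : realType} {D X : finType}.
Notation atom := (D * X * bool)%type.

Lemma sum_atom (f : D -> X -> bool -> R) :
  \sum_(b : atom) f b.1.1 b.1.2 b.2 = \sum_d \sum_x \sum_y f d x y.
Proof.
rewrite -(pair_big xpredT xpredT (fun dx y => f dx.1 dx.2 y)) /=.
by rewrite -(pair_big xpredT xpredT (fun d x => \sum_y f d x y)).
Qed.

Variable n : nat.
Implicit Type s : {ffun 'I_n -> atom}.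

Lemma card_occurrences s a :
  (#|[set i | s i == a]|%:R : R) = \sum_i (s i == a)%:R.
Proof.
rewrite -sum1_card natr_sum big_mkcond /=; apply: eq_bigr => i _.
by rewrite inE; case: (s i == a).
Qed.

Lemma sum_card_occurrences s : \sum_a (#|[set i | s i == a]|%:R : R) = n%:R.
Proof.
under eq_bigr => a _ do rewrite card_occurrences.
rewrite exchange_big /= -[n in RHS]card_ord -sumr_const; apply: eq_bigr => i _.
rewrite (bigD1 (s i)) //= eqxx big1 ?addr0 // => a /negbTE.
by rewrite eq_sym => ->.
Qed.

Lemma empirical_jdist s : (0 < n)%N -> is_jdist (empirical R s).
Proof.
move=> n_gt0; split=> [d x y | ]; first by rewrite divr_ge0.
rewrite -(sum_atom (empirical R s)) /empirical.
under eq_bigr => b _ do rewrite -!surjective_pairing.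
by rewrite -mulr_suml sum_card_occurrences divff // pnatr_eq0 -lt0n.
Qed.

End Empirical.

Lemma marg_YD_empirical1 {R : realType} {D X : finType} (s : {ffun 'I_1 -> D * X * bool}) :
  marg_YD (empirical R s) (~~ (s ord0).2) (s ord0).1.1 = 0.
Proof.
rewrite /marg_YD big1 // => x _; rewrite /empirical card_occurrences big_ord1.
suff /negbTE -> : s ord0 != ((s ord0).1.1, x, ~~ (s ord0).2) by rewrite mul0r.
by apply/eqP => /(congr1 snd) /=; case: (s ord0).2.
Qed.

Section DeviationRate.
Context {R : realType}.

Definition dev_const (A : R) : R := 8 * (1 + 2 * A / ln 2).

Lemma ln2_gt0 : (0 : R) < ln 2.
Proof. by rewrite ln_gt0 // ltr1n. Qed.

Lemma dev_const_ge1 (A : R) : 0 <= A -> 1 <= dev_const A.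
Proof.
move=> A_ge0; have : 0 <= 2 * A / ln 2 by rewrite divr_ge0 ?mulr_ge0 ?(ltW ln2_gt0).
rewrite /dev_const; lra.
Qed.

Lemma exp_tail_le_beta (A beta : R) n : 0 <= A -> (2 <= n)%N -> 0 < beta < 1 ->
  2 * A * expR (- (n%:R * (dev_const A * Num.sqrt (ln (n%:R / beta) / n%:R)) ^+ 2) / 8)
    <= beta.
Proof.
move=> A_ge0 n_ge2 /andP [beta_gt0 beta_lt1].
have n_ge2' : (2 : R) <= n%:R by rewrite ler_nat.
have n_gt0 : (0 : R) < n%:R by lra.
set c := dev_const A; set L := ln (n%:R / beta).
have c_ge1 : 1 <= c := dev_const_ge1 _ A_ge0.
have L_ge : ln 2 <= L.
  have two_le : 2 <= n%:R / beta by rewrite ler_pdivlMr //; nra.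
  by rewrite /L ler_ln ?posrE ?divr_gt0.
have L_gt0 : 0 < L := lt_le_trans ln2_gt0 L_ge.
have -> : n%:R * (c * Num.sqrt (L / n%:R)) ^+ 2 = c ^+ 2 * L.
  by rewrite exprMn sqr_sqrtr ?divr_ge0 ?ltW //; field; rewrite gt_eqF.
have exponent_le : - (c ^+ 2 * L) / 8 <= - L - 2 * A.
  have : c * L <= c ^+ 2 * L by rewrite expr2 -mulrA ler_peMl // mulr_ge0 //; lra.
  have : c * L = 8 * L + 16 * A * (L / ln 2).
    by rewrite /c /dev_const; field; rewrite gt_eqF ?ln2_gt0.
  have : A <= A * (L / ln 2) by rewrite ler_peMr // ler_pdivlMr ?ln2_gt0 // mul1r.
  lra.
have expNL : expR (- L) = beta / n%:R.
  by rewrite expRN /L lnK ?posrE ?divr_gt0 // invf_div.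
have peak_le1 : 2 * A * expR (- (2 * A)) <= 1.
  rewrite expRN ler_pdivrMr ?expR_gt0 // mul1r.
  by have := expR_ge1Dx (2 * A); lra.
apply: le_trans (ler_wpM2l _ (_ : _ <= expR (- L - 2 * A))) _.
- by rewrite mulr_ge0.
- by rewrite ler_expR.
rewrite expRD expNL mulrCA.
have beta_n_ge0 : 0 <= beta / n%:R by rewrite divr_ge0 ?ltW.
apply: le_trans (ler_wpM2l beta_n_ge0 peak_le1) _.
by rewrite mulr1 ler_pdivrMr // ler_peMr ?ltW //; lra.
Qed.

End DeviationRate.

Section Concentration.
Context {R : realType} {D X : finType}.
Notation atom := (D * X * bool)%type.
Variable q : jdist R D X.
Hypothesis q_jdist : is_jdist q.
Variable n : nat.
Notation sample := {ffun 'I_n -> atom}.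

Definition pmf (b : atom) : R := q b.1.1 b.1.2 b.2.
Definition sample_weight (s : sample) : R := \prod_(i < n) pmf (s i).
Definition count_dev (s : sample) (a : atom) : R :=
  #|[set i | s i == a]|%:R - n%:R * pmf a.
Definition count_close (t : R) (s : sample) : bool :=
  [forall a, `|count_dev s a| <= n%:R * t].

Lemma pmf_ge0 b : 0 <= pmf b.
Proof. by case: q_jdist => q_ge0 _; apply: q_ge0. Qed.

Lemma sum_pmf : \sum_b pmf b = 1.
Proof. by rewrite sum_atom; case: q_jdist. Qed.

Lemma pmf_le1 b : pmf b <= 1.
Proof. by rewrite -sum_pmf; apply: ler_sum_term pmf_ge0. Qed.

Lemma sum_sample_weightM (g : atom -> R) :
  \sum_s sample_weight s * \prod_(i < n) g (s i) = (\sum_b pmf b * g b) ^+ n.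
Proof.
under eq_bigr => s _ do rewrite -big_split /=.
by rewrite -(bigA_distr_bigA (fun _ b => pmf b * g b)) prodr_const card_ord.
Qed.

Lemma sample_weight_ge0 s : 0 <= sample_weight s.
Proof. by apply: prodr_ge0 => i _; apply: pmf_ge0. Qed.

Lemma sum_sample_weight : \sum_s sample_weight s = 1.
Proof.
transitivity (\sum_s sample_weight s * \prod_(i < n) (fun=> 1 : R) (s i)).
  by apply: eq_bigr => s _; rewrite big1_eq mulr1.
rewrite (sum_sample_weightM (fun=> 1)).
by under eq_bigr => b _ do rewrite mulr1; rewrite sum_pmf expr1n.
Qed.

Lemma count_dev_sum s a : count_dev s a = \sum_i ((s i == a)%:R - pmf a).
Proof. by rewrite /count_dev card_occurrences sumrB sumr_const card_ord mulr_natl. Qed.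

Lemma mgf_indicator (lam : R) a : `|lam| <= 1 / 2 ->
  \sum_b pmf b * expR (lam * ((b == a)%:R - pmf a)) <= expR (2 * lam ^+ 2).
Proof.
move=> lam_small; apply: le_trans (expR_ge1Dx _).
have pick_a : \sum_b pmf b * (b == a)%:R = pmf a.
  by rewrite (bigD1 a) //= eqxx mulr1 big1 ?addr0 // => b /negbTE ->; rewrite mulr0.
have -> : 1 + 2 * lam ^+ 2 =
    \sum_b pmf b * (1 + lam * ((b == a)%:R - pmf a) + 2 * lam ^+ 2).
  rewrite (_ : \sum_b _ = (1 + 2 * lam ^+ 2 - lam * pmf a) * \sum_b pmf b
                          + lam * \sum_b pmf b * (b == a)%:R).
    by rewrite sum_pmf pick_a; ring.
  by rewrite !mulr_sumr -big_split; apply: eq_bigr => b _ /=; ring.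
apply: ler_sum => b _; apply: ler_wpM2l; first exact: pmf_ge0.
set z := (b == a)%:R - pmf a.
have z_small : `|z| <= 1.
  have := pmf_ge0 a; have := pmf_le1 a.
  by rewrite /z; case: (b == a) => /= *; rewrite ler_norml; apply/andP; split; lra.
have lamz_small : `|lam * z| <= 1 / 2.
  by rewrite normrM; have := ler_pM (normr_ge0 _) (normr_ge0 _) lam_small z_small; lra.
apply: (le_trans (expR_le_quad _ lamz_small)); rewrite lerD2l exprMn ler_wpM2l //.
rewrite -[X in _ <= X]mulr1 ler_wpM2l ?sqr_ge0 // -real_normK ?num_real //.
by rewrite exprn_ile1.
Qed.

Lemma mgf_count_dev (lam c : R) a : `|lam| <= 1 / 2 ->
  \sum_s sample_weight s * expR (lam * count_dev s a - c) <= expR (n%:R * (2 * lam ^+ 2) - c).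
Proof.
move=> lam_small; under eq_bigr => s _ do rewrite expRD mulrA.
rewrite -mulr_suml expRD ler_wpM2r ?expR_ge0 //.
under eq_bigr => s _ do rewrite count_dev_sum mulr_sumr expR_sum.
rewrite (sum_sample_weightM (fun b => expR (lam * ((b == a)%:R - pmf a)))).
rewrite expRM_natl lerXn2r ?nnegrE ?expR_ge0 ?mgf_indicator //.
by apply: sumr_ge0 => b _; rewrite mulr_ge0 ?expR_ge0 ?pmf_ge0.
Qed.

Lemma not_count_close_le t s : 0 <= t -> ~~ count_close t s ->
  1 <= \sum_a (expR (t / 4 * (count_dev s a - n%:R * t))
                + expR (t / 4 * (- count_dev s a - n%:R * t))).
Proof.
move=> t_ge0; rewrite negb_forall => /existsP [a]; rewrite -ltNge => dev_big.
apply: (le_trans _ (ler_sum_term _ a _)); last by move=> b; rewrite addr_ge0 ?expR_ge0.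
have t4_ge0 : 0 <= t / 4 by rewrite divr_ge0.
have expR_ge1 (x : R) : 0 <= x -> 1 <= expR x by move=> x_ge0; have := expR_ge1Dx x; lra.
set Z := count_dev s a; have := expR_ge0 (t / 4 * (Z - n%:R * t)).
have := expR_ge0 (t / 4 * (- Z - n%:R * t)).
move: dev_big; rewrite ltr_normr => /orP [] dev_big.
- have : 1 <= expR (t / 4 * (Z - n%:R * t)).
    by apply: expR_ge1; rewrite mulr_ge0 // subr_ge0 ltW.
  lra.
- have : 1 <= expR (t / 4 * (- Z - n%:R * t)).
    by apply: expR_ge1; rewrite mulr_ge0 // subr_ge0 ltW.
  lra.
Qed.

Lemma prob_not_count_close t : 0 <= t <= 2 ->
  \sum_(s | ~~ count_close t s) sample_weight s
    <= 2 * #|{: atom}|%:R * expR (- (n%:R * t ^+ 2) / 8).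
Proof.
move=> /andP [t_ge0 t_le2].
pose G s := \sum_a (expR (t / 4 * (count_dev s a - n%:R * t))
                    + expR (t / 4 * (- count_dev s a - n%:R * t))).
have markov : \sum_(s | ~~ count_close t s) sample_weight s <= \sum_s sample_weight s * G s.
  rewrite [X in _ <= X](bigID (fun s => ~~ count_close t s)) /= -[X in X <= _]addr0.
  apply: lerD.
    apply: ler_sum => s s_far; rewrite -[X in X <= _]mulr1 ler_wpM2l ?sample_weight_ge0 //.
    exact: not_count_close_le.
  apply: sumr_ge0 => s _; rewrite mulr_ge0 ?sample_weight_ge0 //.
  by apply: sumr_ge0 => a _; rewrite addr_ge0 ?expR_ge0.
have tail (lam : R) a : `|lam| = t / 4 ->
    \sum_s sample_weight s * expR (lam * count_dev s a - t / 4 * (n%:R * t))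
      <= expR (- (n%:R * t ^+ 2) / 8).
  move=> lam_norm; apply: (le_trans (mgf_count_dev _ _ a _)); first by rewrite lam_norm; lra.
  rewrite -real_normK ?num_real // lam_norm.
  by rewrite (_ : _ - _ = - (n%:R * t ^+ 2) / 8) //; field.
apply: le_trans markov _; rewrite /G.
under eq_bigr => s _ do rewrite mulr_sumr; rewrite exchange_big /=.
apply: le_trans (_ : \sum_(a : atom) 2 * expR (- (n%:R * t ^+ 2) / 8) <= _); last first.
  by rewrite sumr_const -[_ *+ #|_|]mulr_natl mulrCA mulrA.
apply: ler_sum => a _; under eq_bigr => s _ do rewrite mulrDr.
rewrite big_split /= mulr2n mulrDl mul1r; apply: lerD.
- under eq_bigr => s _ do rewrite mulrBr.
  by apply: tail; rewrite ger0_norm // divr_ge0.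
- under eq_bigr => s _ do rewrite mulrBr mulrN -mulNr.
  by apply: tail; rewrite normrN ger0_norm // divr_ge0.
Qed.

Lemma count_close_ge1 t s : 1 <= t -> count_close t s.
Proof.
move=> t_ge1; apply/forallP => a; rewrite /count_dev.
have card_le : (#|[set i | s i == a]|%:R : R) <= n%:R.
  by rewrite ler_nat -[n in (_ <= n)%N]card_ord max_card.
have n_ge0 : (0 : R) <= n%:R by [].
have := ler_wpM2l n_ge0 (pmf_le1 a); have := ler_wpM2l n_ge0 t_ge1.
have := mulr_ge0 n_ge0 (pmf_ge0 a); have := ler0n R #|[set i | s i == a]|.
by rewrite ler_norml mulr1 => *; apply/andP; split; lra.
Qed.

Lemma sample_prob_ge (good : pred sample) (E : sample -> Prop) (beta : R) :
  (forall s, good s -> E s) -> \sum_(s | ~~ good s) sample_weight s <= beta ->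
  1 - beta <= sample_prob q E.
Proof.
move=> good_E bad_le; have := sum_sample_weight.
rewrite (bigID good) /=.
suff : \sum_(s | good s) sample_weight s <= sample_prob q E by lra.
rewrite /sample_prob big_mkcond [X in _ <= X]big_mkcond; apply: ler_sum => s _.
case: ifP => [/good_E/asboolT -> // | _]; case: ifP => // _.
exact: sample_weight_ge0.
Qed.

Lemma l1dist_empirical_le t s : (0 < n)%N -> count_close t s ->
  l1dist q (empirical R s) <= #|{: atom}|%:R * t.
Proof.
move=> n_gt0 /forallP close.
have n_gt0' : (0 : R) < n%:R by rewrite ltr0n.
rewrite /l1dist -(sum_atom (fun d x y => `|q d x y - empirical R s d x y|)).
apply: le_trans (_ : \sum_(b : atom) t <= _); last by rewrite sumr_const mulr_natl.
apply: ler_sum => b _; rewrite /empirical -!surjective_pairing.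
rewrite (_ : _ - _ = - count_dev s b / n%:R); last first.
  by rewrite /count_dev /pmf; field; rewrite gt_eqF.
by rewrite normrM normfV normrN (gtr0_norm n_gt0') ler_pdivrMr // mulrC.
Qed.

Lemma prob_not_count_close_le_beta beta : (2 <= n)%N -> 0 < beta < 1 ->
  \sum_(s | ~~ count_close (dev_const #|{: atom}|%:R * Num.sqrt (ln (n%:R / beta) / n%:R)) s)
    sample_weight s <= beta.
Proof.
move=> n_ge2 beta01; set t := _ * _.
have A_ge0 : (0 : R) <= #|{: atom}|%:R by [].
have t_ge0 : 0 <= t.
  by rewrite mulr_ge0 ?sqrtr_ge0 // (le_trans ler01) ?dev_const_ge1.
have [t_le1 | t_gt1] := leP t 1.
  apply: (le_trans _ (exp_tail_le_beta _ _ _ A_ge0 n_ge2 beta01)).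
  by apply: prob_not_count_close => //; rewrite t_ge0 (le_trans t_le1) ?ler1n.
rewrite big_pred0 => [|s]; first by case/andP: beta01 => beta_gt0 _; apply: ltW.
by rewrite count_close_ge1 // ltW.
Qed.

End Concentration.

Theorem proposition3 (R : realType) (D X : finType) (gamma eps : R) :
  0 < gamma -> 0 <= eps ->
  exists C : R, 0 < C /\
  forall (q : jdist R D X) (n : nat) (beta mu : R) (pYT : bool -> R)
         (M : jdist R D X -> kernel R D X),
    is_jdist q -> (0 < n)%N -> 0 < beta < 1 -> is_dist pYT ->
    (forall p, is_kernel (M p)) ->
    let rate := Num.sqrt (ln (n%:R / beta) / n%:R) in
    1 - beta <= sample_prob q (fun s =>
      let p := @empirical R D X n s in
      let K := M p in
      ((forall y d, 0 < marg_YD p y d) ->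
       (forall y d, J (cond_Yhat_D p K y d) (pYT y) <= eps) ->
       Delta (marg_XY p) (marg_XY (push p K)) <= mu ->
       (forall d y, gamma <= marg_DYhat p K d y) ->
       (forall y d, J (cond_Yhat_D q K y d) (pYT y) <= eps + C * rate) /\
       Delta (marg_XY q) (marg_XY (push q K)) <= mu + C * rate)).
Proof.
move=> gamma_gt0 eps_ge0.
pose A : R := #|{: D * X * bool}|%:R; pose k := stab_const gamma eps.
have k_ge0 : 0 <= k by rewrite addr_ge0 // divr_ge0 ?sqr_ge0 //; lra.
have c_gt0 : 0 < dev_const A := lt_le_trans ltr01 (dev_const_ge1 _ (ler0n R _)).
exists (dev_const A * (k * A + 1)); split.
  by rewrite mulr_gt0 // ltr_wpDl ?mulr_ge0.
move=> q n beta mu pYT M q_jd n_gt0 beta01 [pYT_ge0 _] M_ker; cbv zeta.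
set rate := Num.sqrt _.
(* For n = 1 the rate may be arbitrarily small, but a single sample leaves one
   label unseen, so the positivity hypothesis on p_{Y,D} cannot hold. *)
have [n_le1 | n_ge2] := leqP n 1.
  have n1 : n = 1%N by apply/eqP; rewrite eqn_leq n_le1 n_gt0.
  subst n; apply: (sample_prob_ge q q_jd 1 xpredT) => [s _ /= pos | ].
    by move: (pos (~~ (s ord0).2) (s ord0).1.1); rewrite marg_YD_empirical1 ltxx.
  by rewrite big_pred0 //; case/andP: beta01 => beta_gt0 _; apply: ltW.
apply: (sample_prob_ge q q_jd n _ _ beta _
         (prob_not_count_close_le_beta q q_jd n beta n_ge2 beta01)).
move=> s s_close /= _ J_le Delta_le gamma_le.
have err_le : k * l1dist q (empirical R s) <= dev_const A * (k * A + 1) * rate.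
  apply: le_trans (ler_wpM2l k_ge0 (l1dist_empirical_le q _ _ s n_gt0 s_close)) _.
  rewrite -/A -/rate (mulrA k).
  rewrite (_ : dev_const A * (k * A + 1) * rate = (k * A + 1) * (dev_const A * rate)).
    by apply: ler_wpM2r; rewrite ?lerDl // mulr_ge0 ?sqrtr_ge0 // ltW.
  by ring.
have [J_q Delta_q] := fairness_stable _ _ _ _ _ _ _ q_jd (empirical_jdist _ s n_gt0) (M_ker _)
  gamma_gt0 eps_ge0 gamma_le pYT_ge0 J_le Delta_le.
split=> [y d | ]; [apply: le_trans (J_q y d) _ | apply: le_trans Delta_q _].
  by rewrite lerD2l.
by rewrite lerD2l.
Qed.
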